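(* Let $\phi_S(t)=t/\sinh t$ (the hyperbolic-sine characteristic function), whose Khintchine pair is $[0,m_S]$ with $m_S(dx)=\frac{|x|}{1+x^2}\frac{1}{1-e^{-\pi|x|}}\cdot e^{-\pi|x|}\cdot\frac{1}{1}\,dx$, i.e. $m_S(dx)=\frac12\frac{|x|}{1+x^2}\frac{e^{-\pi|x|/2}}{\sinh(\pi|x|/2)}dx$. Its free analogue $\tilde\phi_S$ has Voiculescu transform $$V_{\tilde\phi_S}(it)=-it^2\int_0^\infty[\log\sinh s-\log s]e^{-ts}ds=i\big[t\psi(t/2)-t\ln(t/2)+1\big],\qquad t>0.$$
   Context: $\psi=\Gamma'/\Gamma$ denotes the digamma function. For an infinitely divisible characteristic function $\phi$ with Khintchine exponent $\log\phi$ (continuous logarithm, $\log\phi(0)=0$), its free analogue $\tilde\phi$ is the $\boxplus$-infinitely divisible probability measure whose Voiculescu transform satisfies $V_{\tilde\phi}(it)=it^2\int_0^\infty\overline{\log\phi(s)}e^{-ts}ds$, $t>0$; if $\phi$ has Khintchine pair $[0,m]$ with $m$ symmetric, this equals $-it\int_{\mathbb{R}}\frac{1+x^2}{t^2+x^2}m(dx)$. *)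

From Stdlib Require Import Reals.
Open Scope R_scope.

Definition improper_integral_0_inf (f : R -> R) (l : R) : Prop :=
  (forall a b : R, 0 < a -> a <= b -> inhabited (Riemann_integrable f a b)) /\
  (forall eps : R, 0 < eps ->
     exists delta : R, 0 < delta /\
     exists M : R, 0 < M /\
     forall (a b : R) (pr : Riemann_integrable f a b),
       0 < a -> a < delta -> M < b -> Rabs (RiemannInt pr - l) < eps).

Definition is_Gamma_on_pos (G : R -> R) : Prop :=
  forall x : R, 0 < x ->
    improper_integral_0_inf (fun s => Rpower s (x - 1) * exp (- s)) (G x).

(* Let L(t) = int_0^oo ln (sinh s / s) e^(-ts) ds; it exists and 0 <= L(t) <= 1/t^2 because
   0 <= ln (sinh s / s) <= s.  Integrating by parts against e^(-ts) - e^(-(t+2)s), the identity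
   coth s (e^(-ts) - e^(-(t+2)s)) = e^(-ts) + e^(-(t+2)s) turns the remaining integral into the
   Frullani integral of (e^(-ts) - e^(-(t+2)s)) / s, whence
     t L(t) - (t+2) L(t+2) = 1/t + 1/(t+2) - ln ((t+2)/t).
   So h(y) = ln y - 1/(2y) - 2y L(2y) satisfies h(y+1) = h(y) + 1/y, like the digamma function
   psi = G'/G does by G(y+1) = y G(y).  Both are ln y + O(1/y): h by the bound on L, and psi
   because log-convexity of G (Cauchy-Schwarz on Euler's integral) traps psi(y) between
   ln (y-1) and ln y.  Hence psi - h is 1-periodic and tends to 0, so psi = h; at y = t/2 this
   is the claimed identity. *)

From Stdlib Require Import Reals Lra Classical.
From Coquelicot Require Import Coquelicot.
Open Scope R_scope.

Lemma filterlim_Rplus {T : Type} (F : (T -> Prop) -> Prop) {FF : Filter F} (f g : T -> R)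
  (a b : R) :
  filterlim f F (locally a) -> filterlim g F (locally b) ->
  filterlim (fun x => f x + g x) F (locally (a + b)).
Proof. intros Hf Hg. exact (filterlim_comp_2 f g Rplus Hf Hg (filterlim_plus a b)). Qed.

Lemma filterlim_continuous_at_right (g : R -> R) (x : R) :
  continuous g x -> filterlim g (at_right x) (locally (g x)).
Proof. intros H. eapply filterlim_filter_le_1; [apply filter_le_within | exact H]. Qed.

Lemma filterlim_abs_le_0 {T : Type} (F : (T -> Prop) -> Prop) {FF : Filter F} (g h : T -> R) :
  F (fun s => Rabs (g s) <= h s) -> filterlim h F (locally 0) -> filterlim g F (locally 0).
Proof.
  intros Hgh Hh. apply filterlim_locally. intros eps.
  generalize (filter_and _ _ Hgh (proj1 (filterlim_locally _ _) Hh eps)).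
  apply filter_imp. intros s [Hle Hball].
  change (Rabs (h s - 0) < eps) in Hball. change (Rabs (g s - 0) < eps).
  rewrite Rminus_0_r in *. apply Rabs_def2 in Hball. lra.
Qed.

Lemma filterlim_Rmult_0 {T : Type} (F : (T -> Prop) -> Prop) {FF : Filter F} (h : T -> R)
  (k : R) :
  filterlim h F (locally 0) -> filterlim (fun x => k * h x) F (locally 0).
Proof.
  intros Hh. rewrite <- (Rmult_0_r k).
  exact (filterlim_comp _ _ _ h (fun y => scal k y) F (locally 0) _ Hh (filterlim_scal_r k 0)).
Qed.

Lemma is_lim_Rpower_mul_exp_pinfty (x c : R) : 0 < c ->
  is_lim (fun s => Rpower s x * exp (- (c * s))) p_infty 0.
Proof.
  intros Hc.
  assert (Hexponent : is_lim (fun s => s * (x * (ln s / s) - c)) p_infty m_infty).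
  { replace m_infty with (Rbar_mult p_infty (x * 0 - c)).
    - apply is_lim_mult; [apply is_lim_id | | ].
      + eapply is_lim_minus; [apply is_lim_scal_l, is_lim_div_ln_p | apply is_lim_const |].
        reflexivity.
      + simpl. apply Rlt_not_eq. lra.
    - apply is_Rbar_mult_unique, is_Rbar_mult_p_infty_neg. simpl. lra. }
  apply (is_lim_ext_loc (fun s => exp (s * (x * (ln s / s) - c)))).
  - exists 0. intros s Hs. unfold Rpower. rewrite <- exp_plus. f_equal. field. lra.
  - eapply is_lim_comp; [apply is_lim_exp_m | exact Hexponent |].
    exists 0. intros s _. discriminate.
Qed.

Lemma filterlim_Rpower_at_right_0 (x : R) : 0 < x ->
  filterlim (fun s => Rpower s x) (at_right 0) (locally 0).
Proof.
  intros Hx.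
  assert (Hscal : is_lim (fun y => x * y) m_infty m_infty).
  { replace m_infty with (Rbar_mult x m_infty) at 2.
    - apply (is_lim_scal_l (fun y => y)), is_lim_id.
    - apply is_Rbar_mult_unique, is_Rbar_mult_sym, is_Rbar_mult_m_infty_pos. simpl; lra. }
  unfold Rpower. eapply filterlim_comp; [| apply is_lim_exp_m].
  eapply filterlim_comp; [apply is_lim_ln_0 | exact Hscal].
Qed.

Lemma filterlim_at_right_0_of_bound (g : R -> R) (l k x : R) : 0 < x ->
  at_right 0 (fun a => Rabs (g a - l) <= k * Rpower a x) -> filterlim g (at_right 0) (locally l).
Proof.
  intros Hx Hg.
  apply (filterlim_ext (fun a => (g a - l) + l)); [intros; ring |].
  replace (locally l) with (locally (0 + l)) by (f_equal; ring).
  apply (filterlim_Rplus _ (fun a => g a - l) (fun _ => l)); [| apply filterlim_const].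
  apply (filterlim_abs_le_0 (at_right 0) _ _ Hg), (filterlim_Rmult_0 (at_right 0)).
  now apply filterlim_Rpower_at_right_0.
Qed.

Lemma filterlim_pinfty_0_of_bound (g : R -> R) (k x c : R) : 0 < c ->
  Rbar_locally p_infty (fun s => Rabs (g s) <= k * (Rpower s x * exp (- (c * s)))) ->
  filterlim g (Rbar_locally p_infty) (locally 0).
Proof.
  intros Hc Hg.
  apply (filterlim_abs_le_0 (Rbar_locally p_infty) _ _ Hg).
  apply (filterlim_Rmult_0 (Rbar_locally p_infty)).
  exact (is_lim_Rpower_mul_exp_pinfty x c Hc).
Qed.

Lemma filterlim_inv_pinfty : filterlim Rinv (Rbar_locally p_infty) (locally 0).
Proof. exact (is_lim_inv (fun y => y) p_infty p_infty (is_lim_id p_infty) ltac:(discriminate)). Qed.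

Lemma eq_0_of_periodic_vanishing (D : R -> R) :
  (forall y, 0 < y -> D (y + 1) = D y) ->
  filterlim D (Rbar_locally p_infty) (locally 0) -> forall y, 0 < y -> D y = 0.
Proof.
  intros Hper Hlim y Hy.
  assert (Hconst : forall n, D (y + INR n) = D y).
  { induction n as [|n IH]; [simpl; now rewrite Rplus_0_r |].
    rewrite S_INR, <- Rplus_assoc, Hper; [exact IH |]. pose proof (pos_INR n). lra. }
  assert (Hseq : is_lim_seq (fun n => D (y + INR n)) 0).
  { eapply filterlim_comp; [| exact Hlim].
    apply (is_lim_seq_plus _ _ y p_infty);
      [apply is_lim_seq_const | apply is_lim_seq_INR | reflexivity]. }
  apply (is_lim_seq_ext _ (fun _ => D y)) in Hseq; [| exact Hconst].
  apply is_lim_seq_unique in Hseq. rewrite Lim_seq_const in Hseq. now injection Hseq.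
Qed.

(** * Improper integrals over (0, +oo) *)

Notation at_0_oo := (filter_prod (at_right 0) (Rbar_locally p_infty)).
Notation is_RInt_0_oo f l := (is_RInt_gen f (at_right 0) (Rbar_locally p_infty) l).

Definition continuous_pos (f : R -> R) : Prop := forall s, 0 < s -> continuous f s.

Lemma at_0_oo_intro (P : R * R -> Prop) (d M : R) : 0 < d ->
  (forall a b, 0 < a < d -> M < b -> P (a, b)) -> at_0_oo P.
Proof.
  intros Hd HP. exists (fun a => 0 < a < d) (fun b => M < b).
  - exists (mkposreal d Hd). intros y Hy Hy0. change (Rabs (y - 0) < d) in Hy.
    apply Rabs_def2 in Hy. lra.
  - now exists M.
  - intros a b Ha Hb. now apply HP.
Qed.

Lemma ex_RInt_continuous_pos (f : R -> R) (a b : R) :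
  continuous_pos f -> 0 < a -> 0 < b -> ex_RInt f a b.
Proof.
  intros Hf Ha Hb. apply (ex_RInt_continuous (V := R_CompleteNormedModule)).
  intros z [Hz _]. apply Hf, Rlt_le_trans with (2 := Hz). now apply Rmin_glb_lt.
Qed.

Lemma is_RInt_0_oo_filterlim (f : R -> R) (l : R) : is_RInt_0_oo f l ->
  filterlim (fun ab => RInt f (fst ab) (snd ab)) at_0_oo (locally l).
Proof.
  intros H. apply filterlim_locally. intros eps.
  generalize (proj1 (filterlimi_locally _ _) H eps).
  apply filter_imp. intros [a b] [z [Hz Hball]]. now rewrite (is_RInt_unique _ _ _ _ Hz).
Qed.

Lemma filterlim_is_RInt_0_oo (f : R -> R) (l : R) :
  (forall a b, 0 < a -> a <= b -> ex_RInt f a b) ->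
  filterlim (fun ab => RInt f (fst ab) (snd ab)) at_0_oo (locally l) -> is_RInt_0_oo f l.
Proof.
  intros Hex. apply (filterlimi_lim_ext_loc (fun ab => RInt f (fst ab) (snd ab))).
  apply (at_0_oo_intro _ 1 1); [lra |]. intros a b Ha Hb; simpl.
  apply (RInt_correct (V := R_CompleteNormedModule)), Hex; lra.
Qed.

Lemma improper_integral_0_inf_is_RInt_0_oo (f : R -> R) (l : R) :
  improper_integral_0_inf f l -> is_RInt_0_oo f l.
Proof.
  intros [Hint Hlim]. apply filterlim_is_RInt_0_oo.
  { intros a b Ha Hab. destruct (Hint a b Ha Hab) as [pr]. now apply ex_RInt_Reals_1. }
  apply filterlim_locally. intros eps.
  destruct (Hlim eps (cond_pos eps)) as [d [Hd [M [HM HdM]]]].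
  apply (at_0_oo_intro _ (Rmin d M) M); [now apply Rmin_glb_lt |].
  intros a b [Ha Had] Hb.
  assert (Hab : a <= b) by (pose proof (Rmin_r d M); lra).
  destruct (Hint a b Ha Hab) as [pr]. simpl. rewrite (RInt_Reals _ _ _ pr).
  apply HdM; auto. pose proof (Rmin_l d M); lra.
Qed.

Lemma is_RInt_0_oo_improper_integral_0_inf (f : R -> R) (l : R) : continuous_pos f ->
  is_RInt_0_oo f l -> improper_integral_0_inf f l.
Proof.
  intros Hf H. split.
  { intros a b Ha Hab. constructor. apply ex_RInt_Reals_0, ex_RInt_continuous_pos; auto; lra. }
  intros eps Heps.
  destruct (proj1 (filterlim_locally _ _) (is_RInt_0_oo_filterlim _ _ H) (mkposreal eps Heps))
    as [Q R [d Hd] [M HM] HQR].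
  exists d; split; [apply cond_pos |]. exists (Rmax M 1); split; [pose proof (Rmax_r M 1); lra |].
  intros a b pr Ha Had Hb. rewrite <- RInt_Reals.
  apply (HQR a b).
  - apply Hd; auto. change (Rabs (a - 0) < d). rewrite Rminus_0_r, Rabs_pos_eq; lra.
  - apply HM. pose proof (Rmax_l M 1); lra.
Qed.

Lemma is_RInt_0_oo_unique (f : R -> R) (l1 l2 : R) :
  is_RInt_0_oo f l1 -> is_RInt_0_oo f l2 -> l1 = l2.
Proof.
  intros H1 H2. rewrite <- (is_RInt_gen_unique _ _ H1). exact (is_RInt_gen_unique _ _ H2).
Qed.

Lemma is_RInt_0_oo_lincomb (f g : R -> R) (lf lg k1 k2 : R) :
  is_RInt_0_oo f lf -> is_RInt_0_oo g lg ->
  is_RInt_0_oo (fun s => k1 * f s + k2 * g s) (k1 * lf + k2 * lg).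
Proof.
  intros Hf Hg.
  exact (is_RInt_gen_plus _ _ _ _ (is_RInt_gen_scal _ k1 _ Hf) (is_RInt_gen_scal _ k2 _ Hg)).
Qed.

Lemma is_RInt_0_oo_abs_le (f g : R -> R) (lf lg : R) :
  (forall s, 0 < s -> Rabs (f s) <= g s) ->
  is_RInt_0_oo f lf -> is_RInt_0_oo g lg -> Rabs lf <= lg.
Proof.
  intros Hfg. apply (RInt_gen_norm f g).
  - apply (at_0_oo_intro _ 1 1); [lra |]; simpl; intros; lra.
  - apply (at_0_oo_intro _ 1 1); [lra |]. intros a b Ha Hb x Hx. apply Hfg. simpl in Hx. lra.
Qed.

Lemma RInt_le_RInt_superset (f : R -> R) (a b c d : R) :
  continuous_pos f -> (forall s, 0 < s -> 0 <= f s) ->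
  0 < a -> a <= c -> c <= d -> d <= b -> RInt f c d <= RInt f a b.
Proof.
  intros Hf Hpos Ha Hac Hcd Hdb.
  assert (Hex : forall x y, a <= x -> a <= y -> ex_RInt f x y)
    by (intros; apply ex_RInt_continuous_pos; auto; lra).
  assert (Hge0 : forall x y, a <= x <= y -> 0 <= RInt f x y)
    by (intros x y Hxy; apply RInt_ge_0; try apply Hex; try lra; intros; apply Hpos; lra).
  rewrite <- (RInt_Chasles f a c b), <- (RInt_Chasles f c d b) by (apply Hex; lra).
  pose proof (Hge0 a c ltac:(lra)). pose proof (Hge0 d b ltac:(lra)).
  unfold plus; simpl. lra.
Qed.

Lemma RInt_le_is_RInt_0_oo (f : R -> R) (l a b : R) :
  continuous_pos f -> (forall s, 0 < s -> 0 <= f s) -> is_RInt_0_oo f l ->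
  0 < a -> a <= b -> RInt f a b <= l.
Proof.
  intros Hf Hpos Hl Ha Hab.
  change (Rbar_le (RInt f a b) l).
  apply (filterlim_le (F := at_0_oo) (fun _ => RInt f a b) (fun ab => RInt f (fst ab) (snd ab))).
  - apply (at_0_oo_intro _ a b); [lra |]. intros a' b' Ha' Hb'.
    simpl. apply RInt_le_RInt_superset; auto; lra.
  - apply filterlim_const.
  - now apply is_RInt_0_oo_filterlim.
Qed.

Lemma is_RInt_0_oo_split (f g1 g2 : R -> R) (l1 l2 : R) : continuous_pos f ->
  (forall a b, 0 < a -> a < b -> RInt f a b = g1 a + g2 b) ->
  filterlim g1 (at_right 0) (locally l1) -> filterlim g2 (Rbar_locally p_infty) (locally l2) ->
  is_RInt_0_oo f (l1 + l2).
Proof.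
  intros Hf Hsplit H1 H2. apply filterlim_is_RInt_0_oo.
  { intros; apply ex_RInt_continuous_pos; auto; lra. }
  apply (filterlim_ext_loc (fun ab => g1 (fst ab) + g2 (snd ab))).
  { apply (at_0_oo_intro _ 1 1); [lra |]. intros a b Ha Hb; simpl. symmetry. apply Hsplit; lra. }
  apply (filterlim_Rplus _ (fun ab => g1 (fst ab)) (fun ab => g2 (snd ab))).
  - eapply filterlim_comp; [apply filterlim_fst | exact H1].
  - eapply filterlim_comp; [apply filterlim_snd | exact H2].
Qed.

Lemma is_RInt_0_oo_derive (f K : R -> R) (la lb : R) :
  (forall s, 0 < s -> is_derive K s (f s)) -> continuous_pos f ->
  filterlim K (at_right 0) (locally la) -> filterlim K (Rbar_locally p_infty) (locally lb) ->
  is_RInt_0_oo f (lb - la).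
Proof.
  intros HK Hf Ha Hb. replace (lb - la) with (- la + lb) by ring.
  apply (is_RInt_0_oo_split f (fun a => - K a) K); auto.
  - intros a b Ha0 Hab.
    rewrite (is_RInt_unique f a b (minus (K b) (K a))).
    + unfold minus, plus, opp; simpl. ring.
    + apply (is_RInt_derive (V := R_CompleteNormedModule));
        intros x Hx; rewrite Rmin_left, Rmax_right in Hx by lra; [apply HK | apply Hf]; lra.
  - eapply filterlim_comp; [exact Ha | apply (filterlim_opp la)].
Qed.

(* The partial integrals of f grow with [a, b]; their supremum is the limit. *)
Lemma ex_RInt_0_oo_dominated (f g : R -> R) (lg : R) : continuous_pos f -> continuous_pos g ->
  (forall s, 0 < s -> 0 <= f s <= g s) -> is_RInt_0_oo g lg -> exists l, is_RInt_0_oo f l.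
Proof.
  intros Hf Hg Hfg Hlg.
  set (E := fun r => exists a b, 0 < a <= b /\ r = RInt f a b).
  assert (HE : forall a b, 0 < a <= b -> RInt f a b <= lg).
  { intros a b Hab. apply Rle_trans with (RInt g a b).
    - apply RInt_le; try apply ex_RInt_continuous_pos; auto; try lra.
      intros x Hx; apply Hfg; lra.
    - apply RInt_le_is_RInt_0_oo; auto; try lra. intros s Hs; pose proof (Hfg s Hs); lra. }
  destruct (completeness E) as [m [Hub Hlub]].
  { exists lg. intros r [a [b [Hab ->]]]. now apply HE. }
  { exists (RInt f 1 1), 1, 1. split; [lra | reflexivity]. }
  exists m. apply filterlim_is_RInt_0_oo.
  { intros; apply ex_RInt_continuous_pos; auto; lra. }
  apply filterlim_locally. intros eps.
  destruct (not_all_not_ex _ (fun a0 => exists b0, 0 < a0 <= b0 /\ m - eps < RInt f a0 b0))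
    as [a0 [b0 [Hab0 Hgt]]].
  { intros Hnone. assert (m <= m - eps) by
      (apply Hlub; intros r [a [b [Hab ->]]]; apply Rnot_lt_le; intros Hlt; apply (Hnone a); eauto).
    pose proof (cond_pos eps); lra. }
  apply (at_0_oo_intro _ a0 b0); [lra |]. intros a b Ha Hb.
  assert (RInt f a0 b0 <= RInt f a b)
    by (apply RInt_le_RInt_superset; auto; try lra; intros s Hs; apply Hfg, Hs).
  assert (RInt f a b <= m) by (apply Hub; exists a, b; split; [lra | reflexivity]).
  change (Rabs (RInt f a b - m) < eps). apply Rabs_def1; lra.
Qed.

Lemma exp_neg_le_1 (y : R) : 0 <= y -> exp (- y) <= 1.
Proof.
  intros Hy. rewrite <- exp_0.
  destruct Hy as [Hy | <-]; [apply Rlt_le, exp_increasing; lra | rewrite Ropp_0; lra].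
Qed.

Lemma one_sub_exp_neg_bounds (y : R) : 0 <= y -> 0 <= 1 - exp (- y) <= y.
Proof. intros Hy. pose proof (exp_ineq1_le (- y)). pose proof (exp_neg_le_1 y Hy). lra. Qed.

Lemma div_bounds_of_mul (a b c : R) : 0 < b -> 0 <= a <= c * b -> 0 <= a / b <= c.
Proof.
  intros Hb Ha. assert (0 < / b) by (apply Rinv_0_lt_compat; lra).
  replace c with (c * b * / b) by (field; lra). unfold Rdiv. split; nra.
Qed.

Lemma ln_sub_ln_pred_le (y : R) : 1 < y -> ln y - ln (y - 1) <= 1 / (y - 1).
Proof.
  intros Hy. rewrite <- ln_div by lra.
  pose proof (exp_ineq1_le (ln (y / (y - 1)))) as Hexp.
  rewrite exp_ln in Hexp by (apply Rdiv_lt_0_compat; lra).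
  replace (1 / (y - 1)) with (y / (y - 1) - 1) by (field; lra). lra.
Qed.

Lemma cosh_ge_1 (x : R) : 1 <= cosh x.
Proof. unfold cosh. pose proof (exp_ineq1_le x). pose proof (exp_ineq1_le (- x)). lra. Qed.

Lemma sinh_ge (s : R) : 0 <= s -> s <= sinh s.
Proof.
  intros Hs.
  assert (Hcont : forall x, continuous cosh x)
    by (intros x; apply continuity_pt_filterlim, derivable_continuous_pt, derivable_pt_cosh).
  assert (Hint : RInt cosh 0 s = sinh s).
  { rewrite (is_RInt_unique cosh 0 s (minus (sinh s) (sinh 0))).
    - rewrite sinh_0. unfold minus, plus, opp; simpl. ring.
    - apply (is_RInt_derive (V := R_CompleteNormedModule)); intros x _; [| apply Hcont].
      apply is_derive_Reals, derivable_pt_lim_sinh. }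
  rewrite <- Hint.
  replace s with (RInt (fun _ => 1) 0 s) at 1
    by (rewrite RInt_const; unfold scal; simpl; unfold mult; simpl; ring).
  apply RInt_le; auto.
  - apply ex_RInt_const.
  - apply (ex_RInt_continuous (V := R_CompleteNormedModule)). intros; apply Hcont.
  - intros; apply cosh_ge_1.
Qed.

Lemma sinh_pos (s : R) : 0 < s -> 0 < sinh s.
Proof. intros Hs. pose proof (sinh_ge s (Rlt_le _ _ Hs)). lra. Qed.

Lemma sinh_le_mul_exp (s : R) : 0 <= s -> sinh s <= s * exp s.
Proof.
  intros Hs. unfold sinh. pose proof (exp_ineq1_le (-2 * s)). pose proof (exp_pos s).
  replace (exp (- s)) with (exp s * exp (-2 * s)) by (rewrite <- exp_plus; f_equal; ring).
  nra.
Qed.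

Lemma cosh_mul_exp_sub_exp (t s : R) :
  cosh s * (exp (- (t * s)) - exp (- ((t + 2) * s)))
  = sinh s * (exp (- (t * s)) + exp (- ((t + 2) * s))).
Proof.
  replace (exp (- ((t + 2) * s))) with (exp (- (t * s)) * exp (- s) * exp (- s))
    by (rewrite <- !exp_plus; f_equal; ring).
  unfold cosh, sinh. rewrite exp_Ropp. pose proof (exp_pos s). field. lra.
Qed.

Lemma exp_shift_difference_bounds (t s : R) : 0 < s ->
  0 <= exp (- (t * s)) - exp (- ((t + 2) * s)) <= exp (- (t * s)).
Proof.
  intros Hs. pose proof (exp_pos (- ((t + 2) * s))).
  assert (exp (- ((t + 2) * s)) <= exp (- (t * s))) by (apply Rlt_le, exp_increasing; nra).
  lra.
Qed.

Lemma midpoint_convex_dyadic_chord (phi : R -> R) (a b : R) (n : nat) :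
  (forall x y, 0 < x -> 0 < y -> phi ((x + y) / 2) <= (phi x + phi y) / 2) ->
  0 < a -> 0 < b ->
  0 < a + (b - a) / 2 ^ n /\ phi (a + (b - a) / 2 ^ n) - phi a <= (phi b - phi a) / 2 ^ n.
Proof.
  intros Hmid Ha Hb. induction n as [|n [Hpos Hle]].
  - simpl. replace (a + (b - a) / 1) with b by field. split; [lra | right; field].
  - assert (Hhalf : a + (b - a) / 2 ^ S n = (a + (a + (b - a) / 2 ^ n)) / 2)
      by (simpl; field; apply Rgt_not_eq, pow_lt; lra).
    rewrite Hhalf. split; [lra |].
    specialize (Hmid a (a + (b - a) / 2 ^ n) Ha Hpos). simpl.
    replace ((phi b - phi a) / (2 * 2 ^ n)) with ((phi b - phi a) / 2 ^ n / 2)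
      by (field; apply Rgt_not_eq, pow_lt; lra).
    lra.
Qed.

(* The chord slopes from a to a + (b - a) / 2 ^ n are bounded by the slope from a to b and
   converge to the derivative. *)
Lemma midpoint_convex_tangent (phi : R -> R) (a b d : R) :
  (forall x y, 0 < x -> 0 < y -> phi ((x + y) / 2) <= (phi x + phi y) / 2) ->
  0 < a -> 0 < b -> derivable_pt_lim phi a d -> d * (b - a) <= phi b - phi a.
Proof.
  intros Hmid Ha Hb Hd.
  destruct (Req_dec b a) as [-> | Hba]; [lra |].
  set (h n := (b - a) / 2 ^ n).
  assert (Hpow : forall n, 0 < 2 ^ n) by (intros; apply pow_lt; lra).
  assert (Hh : is_lim_seq h 0).
  { replace (Finite 0) with (Rbar_mult (b - a) 0) by (simpl; f_equal; ring).
    apply (is_lim_seq_ext (fun n => (b - a) * (/ 2) ^ n)).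
    - intros n. unfold h. rewrite pow_inv. reflexivity.
    - apply is_lim_seq_scal_l, is_lim_seq_geom. rewrite Rabs_pos_eq; lra. }
  assert (Hquot : is_lim_seq (fun n => (phi (a + h n) - phi a) / h n) d).
  { apply is_lim_seq_spec. intros eps.
    destruct (Hd eps (cond_pos eps)) as [delta Hdelta].
    destruct (proj2 (is_lim_seq_spec _ _) Hh delta) as [N HN].
    exists N. intros n Hn. apply Hdelta.
    - unfold h. apply Rmult_integral_contrapositive_currified; [lra |].
      apply Rinv_neq_0_compat, Rgt_not_eq, Hpow.
    - specialize (HN n Hn). rewrite Rminus_0_r in HN. exact HN. }
  apply (is_lim_seq_le (fun n => (phi (a + h n) - phi a) / h n * (b - a))
    (fun _ => phi b - phi a) (d * (b - a)) (phi b - phi a)).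
  - intros n.
    replace ((phi (a + h n) - phi a) / h n * (b - a)) with ((phi (a + h n) - phi a) * 2 ^ n)
      by (unfold h; field; split; [apply Rgt_not_eq, Hpow | lra]).
    destruct (midpoint_convex_dyadic_chord phi a b n Hmid Ha Hb) as [_ Hle]. fold (h n) in Hle.
    apply Rmult_le_compat_r with (r := 2 ^ n) in Hle; [| apply Rlt_le, Hpow].
    replace ((phi b - phi a) / 2 ^ n * 2 ^ n) with (phi b - phi a) in Hle
      by (field; apply Rgt_not_eq, Hpow).
    exact Hle.
  - apply (is_lim_seq_scal_r _ (b - a) d Hquot).
  - apply is_lim_seq_const.
Qed.

(** * The Laplace transform of ln (sinh s / s) *)

Definition ln_sinh_ratio (s : R) : R := ln (sinh s) - ln s.

Lemma ln_sinh_ratio_bounds (s : R) : 0 < s -> 0 <= ln_sinh_ratio s <= s.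
Proof.
  intros Hs. unfold ln_sinh_ratio. split.
  - pose proof (ln_le _ _ Hs (sinh_ge s (Rlt_le _ _ Hs))). lra.
  - pose proof (ln_le _ _ (sinh_pos s Hs) (sinh_le_mul_exp s (Rlt_le _ _ Hs))) as Hle.
    rewrite ln_mult, ln_exp in Hle by (auto; apply exp_pos). lra.
Qed.

Definition laplace_integrand (t s : R) : R := ln_sinh_ratio s * exp (- (t * s)).

Lemma continuous_laplace_integrand (t : R) : continuous_pos (laplace_integrand t).
Proof.
  intros s Hs. apply (ex_derive_continuous (V := R_NormedModule)).
  unfold laplace_integrand, ln_sinh_ratio. pose proof (sinh_pos s Hs). auto_derive. auto.
Qed.

Lemma laplace_integrand_bounds (t s : R) : 0 < s ->
  0 <= laplace_integrand t s <= s * exp (- (t * s)).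
Proof.
  intros Hs. pose proof (ln_sinh_ratio_bounds s Hs). pose proof (exp_pos (- (t * s))).
  unfold laplace_integrand. split; [apply Rmult_le_pos |apply Rmult_le_compat_r]; lra.
Qed.

Lemma is_RInt_0_oo_id_mul_exp (t : R) : 0 < t ->
  is_RInt_0_oo (fun s => s * exp (- (t * s))) (1 / t ^ 2).
Proof.
  intros Ht. set (Q s := - (s / t + 1 / t ^ 2) * exp (- (t * s))).
  replace (1 / t ^ 2) with (0 - Q 0) by (unfold Q; rewrite Rmult_0_r, Ropp_0, exp_0; field; lra).
  apply (is_RInt_0_oo_derive _ Q).
  - intros s _. unfold Q. auto_derive; [auto | field; lra].
  - intros s _. apply (ex_derive_continuous (V := R_NormedModule)). auto_derive. auto.
  - apply filterlim_continuous_at_right, (ex_derive_continuous (V := R_NormedModule)).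
    unfold Q. auto_derive. auto.
  - apply (filterlim_pinfty_0_of_bound _ (1 / t + 1 / t ^ 2) 1 t Ht).
    exists 1. intros s Hs. rewrite Rpower_1 by lra. unfold Q.
    pose proof (exp_pos (- (t * s))). assert (0 < 1 / t ^ 2) by (apply Rdiv_lt_0_compat; nra).
    assert (0 < s / t) by (apply Rdiv_lt_0_compat; lra).
    rewrite Rabs_mult, Rabs_Ropp, !Rabs_pos_eq by lra.
    rewrite <- Rmult_assoc. apply Rmult_le_compat_r; [lra |].
    unfold Rdiv. nra.
Qed.

Definition laplace_ln_sinh_ratio (t : R) : R :=
  RInt_gen (laplace_integrand t) (at_right 0) (Rbar_locally p_infty).

Lemma is_RInt_0_oo_laplace_ln_sinh_ratio (t : R) : 0 < t ->
  is_RInt_0_oo (laplace_integrand t) (laplace_ln_sinh_ratio t).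
Proof.
  intros Ht. apply (RInt_gen_correct (V := R_CompleteNormedModule)).
  apply (ex_RInt_0_oo_dominated _ (fun s => s * exp (- (t * s))) (1 / t ^ 2));
    [apply continuous_laplace_integrand | | | exact (is_RInt_0_oo_id_mul_exp t Ht)].
  - intros s _. apply (ex_derive_continuous (V := R_NormedModule)). auto_derive. auto.
  - intros s Hs. now apply laplace_integrand_bounds.
Qed.

Lemma laplace_ln_sinh_ratio_bounds (t : R) : 0 < t -> 0 <= laplace_ln_sinh_ratio t <= 1 / t ^ 2.
Proof.
  intros Ht. pose proof (is_RInt_0_oo_laplace_ln_sinh_ratio t Ht) as HL. split.
  - apply Rle_trans with (RInt (laplace_integrand t) 1 1).
    + rewrite RInt_point. apply Rle_refl.
    + apply RInt_le_is_RInt_0_oo; auto; try lra.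
      * apply continuous_laplace_integrand.
      * intros s Hs. now apply laplace_integrand_bounds.
  - eapply Rle_trans; [apply Rle_abs |].
    refine (is_RInt_0_oo_abs_le _ _ _ _ _ HL (is_RInt_0_oo_id_mul_exp t Ht)).
    intros s Hs. pose proof (laplace_integrand_bounds t s Hs). rewrite Rabs_pos_eq; lra.
Qed.

Lemma continuous_exp_neg_div : continuous_pos (fun u => exp (- u) / u).
Proof. intros u Hu. apply (ex_derive_continuous (V := R_NormedModule)). auto_derive. lra. Qed.

Lemma RInt_exp_neg_mul_div (c a b : R) : 0 < c -> 0 < a -> 0 < b ->
  RInt (fun s => exp (- (c * s)) / s) a b = RInt (fun u => exp (- u) / u) (c * a) (c * b).
Proof.
  intros Hc Ha Hb.
  rewrite <- (Rplus_0_r (c * a)), <- (Rplus_0_r (c * b)), <- RInt_comp_lin.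
  - apply RInt_ext. intros x Hx.
    assert (0 < x) by (apply Rlt_trans with (2 := proj1 Hx); now apply Rmin_glb_lt).
    unfold scal; simpl; unfold mult; simpl. rewrite Rplus_0_r. field. lra.
  - apply ex_RInt_continuous_pos; [apply continuous_exp_neg_div | nra | nra].
Qed.

Lemma RInt_exp_neg_div_near_0 (p q a : R) : 0 < p <= q -> 0 < a ->
  Rabs (RInt (fun u => exp (- u) / u) (p * a) (q * a) - ln (q / p)) <= (q - p) * a.
Proof.
  intros [Hp Hpq] Ha.
  assert (Hpa : 0 < p * a) by nra. assert (Hle : p * a <= q * a) by nra.
  assert (Hinv_cont : continuous_pos Rinv)
    by (intros u Hu; apply (ex_derive_continuous (V := R_NormedModule)); auto_derive; lra).
  assert (Hex_inv : ex_RInt Rinv (p * a) (q * a))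
    by (apply ex_RInt_continuous_pos; auto; nra).
  assert (Hex_exp : ex_RInt (fun u => exp (- u) / u) (p * a) (q * a))
    by (apply ex_RInt_continuous_pos; [apply continuous_exp_neg_div | nra | nra]).
  assert (Hinv : RInt Rinv (p * a) (q * a) = ln (q / p)).
  { rewrite (is_RInt_unique _ _ _ (minus (ln (q * a)) (ln (p * a)))).
    - unfold minus, plus, opp; simpl. rewrite !ln_mult, ln_div by lra. ring.
    - apply (is_RInt_derive (V := R_CompleteNormedModule));
        intros x Hx; rewrite Rmin_left, Rmax_right in Hx by lra.
      + apply is_derive_Reals, derivable_pt_lim_ln. lra.
      + apply Hinv_cont. lra. }
  rewrite <- Hinv, <- (RInt_minus (V := R_CompleteNormedModule)) by assumption.
  replace ((q - p) * a) with ((q * a - p * a) * 1) by ring.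
  apply abs_RInt_le_const; [lra | now apply (ex_RInt_minus (V := R_CompleteNormedModule)) |].
  intros u Hu. pose proof (exp_ineq1_le (- u)). pose proof (exp_neg_le_1 u ltac:(lra)).
  unfold minus, plus, opp; simpl.
  replace (exp (- u) / u + - / u) with (- ((1 - exp (- u)) / u)) by (field; lra).
  rewrite Rabs_Ropp, Rabs_pos_eq
    by (apply Rmult_le_pos; [lra | apply Rlt_le, Rinv_0_lt_compat; lra]).
  apply Rmult_le_reg_r with u; [lra |]. unfold Rdiv. rewrite Rmult_assoc, Rinv_l; lra.
Qed.

Lemma RInt_exp_neg_div_tail (p q b : R) : 0 < p <= q -> 0 < b ->
  Rabs (RInt (fun u => exp (- u) / u) (p * b) (q * b)) <= (q - p) / p * exp (- (p * b)).
Proof.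
  intros [Hp Hpq] Hb. assert (Hpb : 0 < p * b) by nra.
  replace ((q - p) / p * exp (- (p * b))) with ((q * b - p * b) * (exp (- (p * b)) / (p * b)))
    by (field; lra).
  apply abs_RInt_le_const;
    [nra | apply ex_RInt_continuous_pos; [apply continuous_exp_neg_div | nra | nra] |].
  intros u Hu. pose proof (exp_pos (- u)).
  rewrite Rabs_pos_eq by (apply Rlt_le, Rdiv_lt_0_compat; lra).
  apply Rmult_le_compat; [lra | apply Rlt_le, Rinv_0_lt_compat; lra | |].
  - destruct (Req_dec u (p * b)) as [-> | Hne]; [lra |]. apply Rlt_le, exp_increasing. lra.
  - apply Rinv_le_contravar; lra.
Qed.

Lemma is_RInt_0_oo_frullani_exp (p q : R) : 0 < p <= q ->
  is_RInt_0_oo (fun s => (exp (- (p * s)) - exp (- (q * s))) / s) (ln (q / p)).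
Proof.
  intros [Hp Hpq]. set (g u := exp (- u) / u).
  assert (Hg : forall x y, 0 < x -> 0 < y -> ex_RInt g x y)
    by (intros; apply ex_RInt_continuous_pos; [apply continuous_exp_neg_div | lra | lra]).
  assert (Hexp : forall c a b, 0 < c -> 0 < a -> 0 < b ->
    ex_RInt (fun s => exp (- (c * s)) / s) a b).
  { intros c a b Hc Ha Hb. apply ex_RInt_continuous_pos; auto.
    intros s Hs. apply (ex_derive_continuous (V := R_NormedModule)). auto_derive. lra. }
  rewrite <- (Rplus_0_r (ln (q / p))).
  apply (is_RInt_0_oo_split _
    (fun a => RInt g (p * a) (q * a)) (fun b => - RInt g (p * b) (q * b))).
  - intros s Hs. apply (ex_derive_continuous (V := R_NormedModule)). auto_derive. lra.
  - intros a b Ha Hab.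
    rewrite (RInt_ext _ (fun s => minus (exp (- (p * s)) / s) (exp (- (q * s)) / s)))
      by (intros x Hx; rewrite Rmin_left, Rmax_right in Hx by lra;
          unfold minus, plus, opp; simpl; field; lra).
    rewrite (RInt_minus (V := R_CompleteNormedModule)) by (apply Hexp; lra).
    unfold minus, plus, opp; simpl.
    rewrite !RInt_exp_neg_mul_div by lra. fold g.
    rewrite <- (RInt_Chasles g (p * a) (q * a) (p * b)), <- (RInt_Chasles g (q * a) (p * b) (q * b))
      by (apply Hg; nra).
    unfold plus; simpl. ring.
  - apply (filterlim_at_right_0_of_bound _ _ (q - p) 1 Rlt_0_1).
    exists (mkposreal 1 Rlt_0_1). intros a _ Ha. rewrite Rpower_1 by exact Ha.
    now apply RInt_exp_neg_div_near_0.
  - apply (filterlim_pinfty_0_of_bound _ ((q - p) / p) 0 p Hp).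
    exists 0. intros b Hb. rewrite Rpower_O, Rmult_1_l, Rabs_Ropp by exact Hb.
    now apply RInt_exp_neg_div_tail.
Qed.

(* Integration by parts of [t f_t - (t + 2) f_(t+2)], with f_t the Laplace integrand, against
   e^(-ts) - e^(-(t+2)s); by [cosh_mul_exp_sub_exp] what is left is the Frullani integrand. *)
Definition laplace_shift_primitive (t s : R) : R :=
  - ln_sinh_ratio s * (exp (- (t * s)) - exp (- ((t + 2) * s)))
  - exp (- (t * s)) / t - exp (- ((t + 2) * s)) / (t + 2).

Lemma is_derive_laplace_shift_primitive (t s : R) : 0 < t -> 0 < s ->
  is_derive (laplace_shift_primitive t) s
    (1 * (t * laplace_integrand t s + - (t + 2) * laplace_integrand (t + 2) s)
     + 1 * ((exp (- (t * s)) - exp (- ((t + 2) * s))) / s)).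
Proof.
  intros Ht Hs. pose proof (sinh_pos s Hs).
  unfold laplace_shift_primitive, laplace_integrand, ln_sinh_ratio.
  auto_derive; [auto |].
  assert (Hkey : (1 * cosh s * / sinh s + - (1 * / s)) * (exp (- (t * s)) + - exp (- ((t + 2) * s)))
    = (exp (- (t * s)) + exp (- ((t + 2) * s))) - (exp (- (t * s)) - exp (- ((t + 2) * s))) / s).
  { transitivity (cosh s * (exp (- (t * s)) - exp (- ((t + 2) * s))) / sinh s
      - (exp (- (t * s)) - exp (- ((t + 2) * s))) / s); [field; lra |].
    rewrite cosh_mul_exp_sub_exp. field. lra. }
  rewrite <- (Ropp_mult_distr_l (1 * cosh s * / sinh s + - (1 * / s))), Hkey.
  field. lra.
Qed.

Lemma laplace_shift_primitive_at_0 (t : R) : 0 < t ->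
  filterlim (laplace_shift_primitive t) (at_right 0) (locally (- (1 / t + 1 / (t + 2)))).
Proof.
  intros Ht. apply (filterlim_at_right_0_of_bound _ _ 2 1 Rlt_0_1).
  exists (mkposreal 1 Rlt_0_1). intros s _ Hs. rewrite Rpower_1 by exact Hs.
  pose proof (ln_sinh_ratio_bounds s Hs).
  assert (H1 : 0 <= (1 - exp (- (t * s))) / t <= s).
  { apply div_bounds_of_mul; [lra |].
    pose proof (one_sub_exp_neg_bounds (t * s) ltac:(nra)). nra. }
  assert (H2 : 0 <= (1 - exp (- ((t + 2) * s))) / (t + 2) <= s).
  { apply div_bounds_of_mul; [lra |].
    pose proof (one_sub_exp_neg_bounds ((t + 2) * s) ltac:(nra)). nra. }
  pose proof (exp_shift_difference_bounds t s Hs). pose proof (exp_neg_le_1 (t * s) ltac:(nra)).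
  unfold laplace_shift_primitive.
  replace (- ln_sinh_ratio s * (exp (- (t * s)) - exp (- ((t + 2) * s))) - exp (- (t * s)) / t
    - exp (- ((t + 2) * s)) / (t + 2) - - (1 / t + 1 / (t + 2)))
    with (- (ln_sinh_ratio s * (exp (- (t * s)) - exp (- ((t + 2) * s))))
      + (1 - exp (- (t * s))) / t + (1 - exp (- ((t + 2) * s))) / (t + 2)) by (field; lra).
  apply Rabs_le. nra.
Qed.

Lemma laplace_shift_primitive_at_pinfty (t : R) : 0 < t ->
  filterlim (laplace_shift_primitive t) (Rbar_locally p_infty) (locally 0).
Proof.
  intros Ht. apply (filterlim_pinfty_0_of_bound _ (1 + 2 / t) 1 t Ht).
  exists 1. intros s Hs. rewrite Rpower_1 by lra.
  pose proof (ln_sinh_ratio_bounds s ltac:(lra)).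
  pose proof (exp_shift_difference_bounds t s ltac:(lra)).
  pose proof (exp_pos (- ((t + 2) * s))). pose proof (exp_pos (- (t * s))).
  assert (Hdiv1 : 0 <= exp (- (t * s)) / t <= s * (exp (- (t * s)) / t)).
  { assert (0 < exp (- (t * s)) / t) by (apply Rdiv_lt_0_compat; lra). split; nra. }
  assert (Hdiv2 : 0 <= exp (- ((t + 2) * s)) / (t + 2) <= exp (- (t * s)) / t).
  { split; [apply Rmult_le_pos; [lra | apply Rlt_le, Rinv_0_lt_compat; lra] |].
    apply Rmult_le_compat; try lra;
      [apply Rlt_le, Rinv_0_lt_compat; lra | apply Rinv_le_contravar; lra]. }
  assert (Hprod : 0 <= ln_sinh_ratio s * (exp (- (t * s)) - exp (- ((t + 2) * s)))
                    <= s * exp (- (t * s)))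
    by (split; [apply Rmult_le_pos | apply Rmult_le_compat]; lra).
  replace ((1 + 2 / t) * (s * exp (- (t * s))))
    with (s * exp (- (t * s)) + 2 * (s * (exp (- (t * s)) / t)))
    by (field; lra).
  unfold laplace_shift_primitive. apply Rabs_le. lra.
Qed.

Lemma laplace_ln_sinh_ratio_shift (t : R) : 0 < t ->
  t * laplace_ln_sinh_ratio t - (t + 2) * laplace_ln_sinh_ratio (t + 2)
  = 1 / t + 1 / (t + 2) - ln ((t + 2) / t).
Proof.
  intros Ht.
  assert (Hcont : continuous_pos (fun s =>
    1 * (t * laplace_integrand t s + - (t + 2) * laplace_integrand (t + 2) s)
    + 1 * ((exp (- (t * s)) - exp (- ((t + 2) * s))) / s))).
  { intros s Hs. pose proof (sinh_pos s Hs). apply (ex_derive_continuous (V := R_NormedModule)).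
    unfold laplace_integrand, ln_sinh_ratio. auto_derive. repeat split; auto; lra. }
  assert (Hprim := is_RInt_0_oo_derive _ (laplace_shift_primitive t) _ _
    (fun s Hs => is_derive_laplace_shift_primitive t s Ht Hs) Hcont
    (laplace_shift_primitive_at_0 t Ht) (laplace_shift_primitive_at_pinfty t Ht)).
  assert (Hsum := is_RInt_0_oo_lincomb _ _ _ _ 1 1
    (is_RInt_0_oo_lincomb _ _ _ _ t (- (t + 2))
      (is_RInt_0_oo_laplace_ln_sinh_ratio t Ht)
      (is_RInt_0_oo_laplace_ln_sinh_ratio (t + 2) ltac:(lra)))
    (is_RInt_0_oo_frullani_exp t (t + 2) ltac:(lra))).
  pose proof (is_RInt_0_oo_unique _ _ _ Hprim Hsum). lra.
Qed.

Definition digamma_laplace (y : R) : R :=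
  ln y - 1 / (2 * y) - 2 * y * laplace_ln_sinh_ratio (2 * y).

Lemma digamma_laplace_succ (y : R) : 0 < y -> digamma_laplace (y + 1) = digamma_laplace y + 1 / y.
Proof.
  intros Hy. unfold digamma_laplace.
  pose proof (laplace_ln_sinh_ratio_shift (2 * y) ltac:(lra)) as Hshift.
  replace (2 * y + 2) with (2 * (y + 1)) in Hshift by ring.
  replace (2 * (y + 1) / (2 * y)) with ((y + 1) / y) in Hshift by (field; lra).
  rewrite ln_div in Hshift by lra.
  replace (2 * (y + 1) * laplace_ln_sinh_ratio (2 * (y + 1)))
    with (2 * y * laplace_ln_sinh_ratio (2 * y)
          - (1 / (2 * y) + 1 / (2 * (y + 1)) - (ln (y + 1) - ln y)))
    by lra.
  field. lra.
Qed.

Lemma digamma_laplace_near_ln (y : R) : 0 < y -> 0 <= ln y - digamma_laplace y <= / y.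
Proof.
  intros Hy. unfold digamma_laplace.
  destruct (laplace_ln_sinh_ratio_bounds (2 * y) ltac:(lra)) as [HL0 HL1].
  assert (0 <= 2 * y * laplace_ln_sinh_ratio (2 * y) <= 1 / (2 * y)).
  { split; [nra |]. replace (1 / (2 * y)) with (2 * y * (1 / (2 * y) ^ 2)) by (field; lra). nra. }
  assert (1 / (2 * y) + 1 / (2 * y) = / y) by (field; lra).
  assert (0 < 1 / (2 * y)) by (apply Rdiv_lt_0_compat; lra).
  lra.
Qed.

(** * The Gamma and digamma functions *)

Definition Gamma_integrand (x s : R) : R := Rpower s (x - 1) * exp (- s).

Lemma Gamma_integrand_pos (x s : R) : 0 < Gamma_integrand x s.
Proof. apply Rmult_lt_0_compat; apply exp_pos. Qed.

Lemma continuous_Gamma_integrand (x : R) : continuous_pos (Gamma_integrand x).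
Proof.
  intros s Hs. apply (ex_derive_continuous (V := R_NormedModule)).
  unfold Gamma_integrand, Rpower. auto_derive. exact Hs.
Qed.

Lemma Gamma_integrand_midpoint (x y s : R) :
  Gamma_integrand ((x + y) / 2) s ^ 2 = Gamma_integrand x s * Gamma_integrand y s.
Proof.
  unfold Gamma_integrand, Rpower. simpl. rewrite Rmult_1_r, <- !exp_plus. f_equal. field.
Qed.

Section Gamma.

Variable G : R -> R.
Hypothesis HG : forall x, 0 < x -> is_RInt_0_oo (Gamma_integrand x) (G x).

Lemma Gamma_pos (x : R) : 0 < x -> 0 < G x.
Proof.
  intros Hx. apply Rlt_le_trans with (RInt (Gamma_integrand x) 1 2).
  - apply RInt_gt_0; [lra | intros; apply Gamma_integrand_pos |].
    intros s Hs; apply continuous_Gamma_integrand; lra.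
  - apply RInt_le_is_RInt_0_oo; auto; try lra.
    + apply continuous_Gamma_integrand.
    + intros; apply Rlt_le, Gamma_integrand_pos.
Qed.

Lemma Gamma_succ (x : R) : 0 < x -> G (x + 1) = x * G x.
Proof.
  intros Hx.
  set (K s := - (Rpower s x * exp (- s))).
  assert (HK : forall s, 0 < s -> Rabs (K s) = Rpower s x * exp (- (1 * s))).
  { intros s _. unfold K. rewrite Rmult_1_l, Rabs_Ropp, Rabs_pos_eq; [reflexivity |].
    apply Rlt_le, Rmult_lt_0_compat; apply exp_pos. }
  assert (Hint : is_RInt_0_oo
            (fun s => 1 * Gamma_integrand (x + 1) s + - x * Gamma_integrand x s) (0 - 0)).
  { apply (is_RInt_0_oo_derive _ K).
    - intros s Hs. unfold K, Gamma_integrand, Rpower. auto_derive; [exact Hs |].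
      replace ((x + 1 - 1) * ln s) with (x * ln s) by ring.
      replace ((x - 1) * ln s) with (x * ln s + - ln s) by ring.
      rewrite exp_plus, (exp_Ropp (ln s)), (exp_ln s Hs).
      field. lra.
    - intros s Hs. apply (ex_derive_continuous (V := R_NormedModule)).
      unfold Gamma_integrand, Rpower. auto_derive. auto.
    - apply (filterlim_at_right_0_of_bound _ _ 1 x Hx).
      exists (mkposreal 1 Rlt_0_1). intros s _ Hs. rewrite Rminus_0_r, HK by exact Hs.
      rewrite !Rmult_1_l.
      pose proof (exp_neg_le_1 s ltac:(lra)). pose proof (exp_pos (x * ln s)). unfold Rpower. nra.
    - apply (filterlim_pinfty_0_of_bound _ 1 x 1 Rlt_0_1).
      exists 0. intros s Hs. rewrite HK by exact Hs. lra. }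
  pose proof (is_RInt_0_oo_unique _ _ _ Hint
    (is_RInt_0_oo_lincomb _ _ _ _ 1 (- x) (HG (x + 1) ltac:(lra)) (HG x Hx))).
  lra.
Qed.

(* Cauchy-Schwarz for Euler's integral: integrate the pointwise AM-GM bound
   g_m <= lam/2 g_x + g_y/(2 lam), where g_m^2 = g_x g_y, and take lam = G m / G x. *)
Lemma Gamma_midpoint_sq_le (x y : R) : 0 < x -> 0 < y ->
  G ((x + y) / 2) ^ 2 <= G x * G y.
Proof.
  intros Hx Hy. set (m := (x + y) / 2).
  pose proof (Gamma_pos x Hx) as Gx. pose proof (Gamma_pos y Hy) as Gy.
  pose proof (Gamma_pos m ltac:(unfold m; lra)) as Gm.
  set (lam := G m / G x).
  assert (Hlam : 0 < lam) by (apply Rdiv_lt_0_compat; auto).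
  assert (Hamgm : Rabs (G m) <= lam / 2 * G x + / (2 * lam) * G y).
  { apply (is_RInt_0_oo_abs_le (Gamma_integrand m)
      (fun s => lam / 2 * Gamma_integrand x s + / (2 * lam) * Gamma_integrand y s)).
    - intros s _. pose proof (Gamma_integrand_midpoint x y s) as Hsq. fold m in Hsq.
      pose proof (Gamma_integrand_pos x s). pose proof (Gamma_integrand_pos y s).
      pose proof (Gamma_integrand_pos m s).
      rewrite Rabs_pos_eq by lra.
      apply Rmult_le_reg_l with (2 * lam * Gamma_integrand x s); [nra |].
      pose proof (pow2_ge_0 (lam * Gamma_integrand x s - Gamma_integrand m s)).
      replace (2 * lam * Gamma_integrand x s *
        (lam / 2 * Gamma_integrand x s + / (2 * lam) * Gamma_integrand y s))
        with ((lam * Gamma_integrand x s) ^ 2 + Gamma_integrand x s * Gamma_integrand y s)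
        by (field; lra).
      nra.
    - apply HG. unfold m; lra.
    - apply is_RInt_0_oo_lincomb; auto. }
  rewrite Rabs_pos_eq in Hamgm by lra. unfold lam in Hamgm.
  replace (G m / G x / 2 * G x + / (2 * (G m / G x)) * G y) with (G m / 2 + G x * G y / (2 * G m))
    in Hamgm by (field; lra).
  apply Rmult_le_reg_r with (/ (2 * G m)); [apply Rinv_0_lt_compat; lra |].
  replace (G m ^ 2 * / (2 * G m)) with (G m / 2) by (field; lra).
  unfold Rdiv in Hamgm. lra.
Qed.

Variable dG : R -> R.
Hypothesis HdG : forall x, 0 < x -> derivable_pt_lim G x (dG x).

Lemma digamma_succ (y : R) : 0 < y -> dG (y + 1) / G (y + 1) = dG y / G y + 1 / y.
Proof.
  intros Hy.
  assert (Hshift : is_derive (fun z => G (z + 1)) y (scal 1 (dG (y + 1)))).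
  { apply (is_derive_comp G (fun z => z + 1)).
    - apply is_derive_Reals, HdG. lra.
    - auto_derive; auto. }
  assert (Hprod : is_derive (fun z => z * G z) y (1 * G y + y * dG y)).
  { apply is_derive_Reals, (derivable_pt_lim_mult id G);
      [apply derivable_pt_lim_id | now apply HdG]. }
  apply (is_derive_ext_loc _ (fun z => z * G z)) in Hshift.
  2:{ exists (mkposreal y Hy). intros z Hz. change (Rabs (z - y) < y) in Hz.
      apply Rabs_def2 in Hz. apply Gamma_succ. lra. }
  rewrite Gamma_succ by exact Hy.
  apply is_derive_unique in Hshift. apply is_derive_unique in Hprod.
  rewrite Hshift in Hprod.
  unfold scal in Hprod; simpl in Hprod; unfold mult in Hprod; simpl in Hprod.
  pose proof (Gamma_pos y Hy). rewrite Rmult_1_l in Hprod. rewrite Hprod. field. lra.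
Qed.

Lemma derivable_pt_lim_ln_Gamma (y : R) : 0 < y ->
  derivable_pt_lim (fun z => ln (G z)) y (dG y / G y).
Proof.
  intros Hy. unfold Rdiv. rewrite Rmult_comm.
  apply (derivable_pt_lim_comp G ln); [now apply HdG | apply derivable_pt_lim_ln, Gamma_pos, Hy].
Qed.

Lemma ln_Gamma_midpoint_convex (x y : R) : 0 < x -> 0 < y ->
  ln (G ((x + y) / 2)) <= (ln (G x) + ln (G y)) / 2.
Proof.
  intros Hx Hy.
  pose proof (Gamma_pos x Hx). pose proof (Gamma_pos y Hy).
  pose proof (Gamma_pos ((x + y) / 2) ltac:(lra)).
  assert (Hln : ln (G ((x + y) / 2) * G ((x + y) / 2)) <= ln (G x * G y)).
  { apply ln_le; [nra |]. pose proof (Gamma_midpoint_sq_le x y Hx Hy). simpl in *. lra. }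
  rewrite !ln_mult in Hln by auto. lra.
Qed.

Lemma digamma_le_ln (y : R) : 0 < y -> dG y / G y <= ln y.
Proof.
  intros Hy.
  pose proof (midpoint_convex_tangent (fun z => ln (G z)) y (y + 1) (dG y / G y)
    ln_Gamma_midpoint_convex Hy ltac:(lra) (derivable_pt_lim_ln_Gamma y Hy)) as Htan.
  simpl in Htan. rewrite Gamma_succ, ln_mult in Htan by (auto; apply Gamma_pos, Hy). lra.
Qed.

Lemma ln_pred_le_digamma (y : R) : 1 < y -> ln (y - 1) <= dG y / G y.
Proof.
  intros Hy.
  pose proof (midpoint_convex_tangent (fun z => ln (G z)) y (y - 1) (dG y / G y)
    ln_Gamma_midpoint_convex ltac:(lra) ltac:(lra) (derivable_pt_lim_ln_Gamma y ltac:(lra)))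
    as Htan.
  simpl in Htan.
  replace (G y) with (G (y - 1 + 1)) in Htan at 2 by (f_equal; ring).
  rewrite Gamma_succ, ln_mult in Htan by (try lra; apply Gamma_pos; lra).
  lra.
Qed.

Lemma digamma_eq_digamma_laplace (y : R) : 0 < y -> dG y / G y = digamma_laplace y.
Proof.
  enough (HD : forall z, 0 < z -> dG z / G z - digamma_laplace z = 0)
    by (intros Hy; specialize (HD y Hy); lra).
  apply eq_0_of_periodic_vanishing.
  - intros z Hz. rewrite digamma_succ, digamma_laplace_succ by exact Hz. ring.
  - apply (filterlim_abs_le_0 _ _ (fun z => 2 * / z));
      [| apply (filterlim_Rmult_0 (Rbar_locally p_infty)), filterlim_inv_pinfty].
    exists 2. intros z Hz.
    pose proof (digamma_le_ln z ltac:(lra)). pose proof (ln_pred_le_digamma z ltac:(lra)).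
    pose proof (ln_sub_ln_pred_le z ltac:(lra)). pose proof (digamma_laplace_near_ln z ltac:(lra)).
    assert (1 / (z - 1) <= 2 * / z).
    { apply Rmult_le_reg_r with (z * (z - 1)); [nra |]. field_simplify; lra. }
    apply Rabs_le. lra.
Qed.

End Gamma.

Theorem corollary3 :
  forall (G dG : R -> R),
    is_Gamma_on_pos G ->
    (forall x : R, 0 < x -> derivable_pt_lim G x (dG x)) ->
    forall t : R, 0 < t ->
      exists l : R,
        improper_integral_0_inf
          (fun s => (ln (sinh s) - ln s) * exp (- (t * s))) l /\
        - t ^ 2 * l = t * (dG (t / 2) / G (t / 2)) - t * ln (t / 2) + 1.
Proof.
  intros G dG HG HdG t Ht.
  assert (HG' : forall x, 0 < x -> is_RInt_0_oo (Gamma_integrand x) (G x))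
    by (intros x Hx; now apply improper_integral_0_inf_is_RInt_0_oo, HG).
  exists (laplace_ln_sinh_ratio t). split.
  - apply is_RInt_0_oo_improper_integral_0_inf;
      [apply continuous_laplace_integrand | now apply is_RInt_0_oo_laplace_ln_sinh_ratio].
  - rewrite (digamma_eq_digamma_laplace G HG' dG HdG (t / 2)) by lra.
    unfold digamma_laplace. replace (2 * (t / 2)) with t by field. field. lra.
Qed.
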